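(* Let $P$ be an $n\times n$ doubly stochastic matrix all of whose diagonal entries are positive. If $P$ is SIA, then $P$ is a Sarymsakov matrix (i.e., $P\in\mathcal S_1$).
   Context: $\mathcal N=\{1,\ldots,n\}$. A matrix is stochastic if it is entrywise nonnegative with row sums $1$, and doubly stochastic if in addition its column sums are $1$. A stochastic $P$ is SIA if $\lim_{m\to\infty}P^m=\mathbf 1c^T$ for some nonnegative $c$ with entries summing to $1$. For stochastic $P$ and $\mathcal A\subseteq\mathcal N$, $F_P(\mathcal A)=\{j:\ p_{ij}>0\text{ for some } i\in\mathcal A\}$. A Sarymsakov matrix is a stochastic $P$ such that for any disjoint nonempty $\mathcal A,\tilde{\mathcal A}\subseteq\mathcal N$, either $F_P(\mathcal A)\cap F_P(\tilde{\mathcal A})\neq\emptyset$, or $F_P(\mathcal A)\cap F_P(\tilde{\mathcal A})=\emptyset$ and $|F_P(\mathcal A)\cup F_P(\tilde{\mathcal A})|>|\mathcal A\cup\tilde{\mathcal A}|$. *)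

From Stdlib Require Import Reals.
From mathcomp Require Import all_boot.
Set Implicit Arguments. Unset Strict Implicit. Unset Printing Implicit Defensive.

(* n x n real matrices, indexed by 'I_n (0-based; corresponds to N={1..n}). *)
Definition rmat (n : nat) := 'I_n -> 'I_n -> R.

Definition rsum (n : nat) (f : 'I_n -> R) : R := \big[Rplus/R0]_(k < n) f k.

Definition rmul (n : nat) (A B : rmat n) : rmat n :=
  fun i j => rsum (fun k => Rmult (A i k) (B k j)).

Definition rid (n : nat) : rmat n := fun i j => if i == j then R1 else R0.

Fixpoint rpow (n : nat) (P : rmat n) (m : nat) : rmat n :=
  match m with
  | O => @rid n
  | S m' => rmul (rpow P m') P
  end.

Definition stochastic (n : nat) (P : rmat n) : Prop :=
  (forall i j, Rle R0 (P i j)) /\ (forall i, rsum (fun j => P i j) = R1).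

Definition doubly_stochastic (n : nat) (P : rmat n) : Prop :=
  stochastic P /\ (forall j, rsum (fun i => P i j) = R1).

Definition SIA (n : nat) (P : rmat n) : Prop :=
  stochastic P /\
  exists c : 'I_n -> R,
    (forall j, Rle R0 (c j)) /\ rsum c = R1 /\
    (forall i j, Un_cv (fun m => rpow P m i j) (c j)).

Definition FP (n : nat) (P : rmat n) (A : {set 'I_n}) : {set 'I_n} :=
  [set j | [exists i in A, Rlt_dec R0 (P i j)]].

Definition sarymsakov (n : nat) (P : rmat n) : Prop :=
  stochastic P /\
  forall A A' : {set 'I_n},
    A != set0 -> A' != set0 -> [disjoint A & A'] ->
    (FP P A :&: FP P A' != set0) \/
    (FP P A :&: FP P A' = set0 /\ #|A :|: A'| < #|FP P A :|: FP P A'|).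

(** A positive diagonal gives [A \subset F_P(A)]. If [F_P(A)] and [F_P(A')]
    are disjoint and [|F_P(A) :|: F_P(A')| <= |A :|: A'|], counting forces
    [F_P(A) = A] and [F_P(A') = A'], so [A] and [A'] are closed: no power of
    [P] leads out of them. The limit row [c] of the powers then vanishes
    outside [A] and outside [A'], hence everywhere since [A] and [A'] are
    disjoint, contradicting [rsum c = 1]. *)
From Stdlib Require Import Reals.
From mathcomp Require Import all_boot.

Set Implicit Arguments. Unset Strict Implicit. Unset Printing Implicit Defensive.

Lemma rsum_eq0 (n : nat) (f : 'I_n -> R) : (forall k, f k = R0) -> rsum f = R0.
Proof.
move=> f0; rewrite /rsum; apply: (big_ind (fun x => x = R0)) => //.
by move=> x y -> ->; rewrite Rplus_0_r.
Qed.

Lemma FP_diag_sub (n : nat) (P : rmat n) (A : {set 'I_n}) :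
  (forall i, Rlt R0 (P i i)) -> A \subset FP P A.
Proof.
move=> Pdiag; apply/subsetP => x xA; rewrite inE; apply/existsP; exists x.
by rewrite xA /=; case: Rlt_dec => // /(_ (Pdiag x)).
Qed.

Lemma FP_sub_entry0 (n : nat) (P : rmat n) (A : {set 'I_n}) :
  stochastic P -> FP P A \subset A ->
  forall i j, i \in A -> j \notin A -> P i j = R0.
Proof.
move=> [Pge0 _] /subsetP FPA i j iA jA.
case: (Rle_lt_or_eq_dec _ _ (Pge0 i j)) => // Pij_gt0.
suff: j \in A by rewrite (negbTE jA).
apply: FPA; rewrite inE; apply/existsP; exists i; rewrite iA /=.
by case: Rlt_dec.
Qed.

Lemma rpow_closed_entry0 (n : nat) (P : rmat n) (A : {set 'I_n}) :
  (forall i j, i \in A -> j \notin A -> P i j = R0) ->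
  forall m i j, i \in A -> j \notin A -> rpow P m i j = R0.
Proof.
move=> PA; elim=> [|m IHm] i j iA jA /=.
  by rewrite /rid; case: eqP => // eq_ij; rewrite -eq_ij iA in jA.
apply: rsum_eq0 => k; case kA: (k \in A).
  by rewrite (PA k j kA jA) Rmult_0_r.
by rewrite (IHm i k iA (negbT kA)) Rmult_0_l.
Qed.

Lemma limit_FP_sub_eq0 (n : nat) (P : rmat n) (A : {set 'I_n}) (c : 'I_n -> R) :
  stochastic P -> FP P A \subset A -> A != set0 ->
  (forall i j, Un_cv (fun m => rpow P m i j) (c j)) ->
  forall j, j \notin A -> c j = R0.
Proof.
move=> Pst FPA /set0Pn [i iA] Pc j jA.
apply: (UL_sequence (fun m => rpow P m i j)) => // eps eps_gt0.
exists 0%nat => m _; unfold R_dist.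
rewrite (rpow_closed_entry0 (FP_sub_entry0 Pst FPA) m iA jA).
by rewrite Rminus_0_r Rabs_R0.
Qed.

Lemma disjointU_card_sub_eq (T : finType) (A A' F F' : {set T}) :
  A \subset F -> A' \subset F' -> [disjoint F & F'] ->
  #|F :|: F'| <= #|A :|: A'| -> F = A /\ F' = A'.
Proof.
move=> AF A'F' FF' le_card.
have AA' : [disjoint A & A'].
  exact: disjointWl AF (disjointWr A'F' FF').
move: le_card; rewrite !cardsU (disjoint_setI0 FF') (disjoint_setI0 AA').
rewrite cards0 !subn0 => le_card.
have le_F := subset_leq_card AF; have le_F' := subset_leq_card A'F'.
split; apply/esym/eqP; rewrite eqEcard ?AF ?A'F' /=.
- by rewrite -(leq_add2r #|F'|) (leq_trans le_card) ?leq_add2l.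
- by rewrite -(leq_add2l #|F|) (leq_trans le_card) ?leq_add2r.
Qed.

Theorem proposition3 (n : nat) (P : rmat n) :
  doubly_stochastic P ->
  (forall i, Rlt R0 (P i i)) ->
  SIA P ->
  sarymsakov P.
Proof.
move=> [Pst _] Pdiag [_ [c [_ [sum_c Pc]]]].
split=> // A A' A_n0 A'_n0 AA'.
have [FF'_0 | FF'_n0] := eqVneq (FP P A :&: FP P A') set0; last by left.
right; split=> //; rewrite ltnNge; apply/negP => le_card.
have FF' : [disjoint FP P A & FP P A'] by rewrite -setI_eq0 FF'_0.
have [FA FA'] := disjointU_card_sub_eq (FP_diag_sub A Pdiag)
  (FP_diag_sub A' Pdiag) FF' le_card.
have c0 : forall j, c j = R0.
  move=> j; have [jA | jNA] := boolP (j \in A).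
    apply: (limit_FP_sub_eq0 Pst _ A'_n0 Pc); first by rewrite FA'.
    by apply: contraL jA => jA'; rewrite (disjointFl AA').
  by apply: (limit_FP_sub_eq0 Pst _ A_n0 Pc); rewrite ?FA.
by move: sum_c; rewrite rsum_eq0 //; move/esym; apply: R1_neq_R0.
Qed.
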